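(* Let $X$ be a uniformly convex Banach space and $Y$ a finite-dimensional Banach space. Then the pair $(X,Y)$ has the sBPBp.
   Context: All Banach spaces are over $\mathbb{K}=\mathbb{R}$ or $\mathbb{C}$. $S_X$ denotes the unit sphere of $X$ and $\mathcal{L}(X,Y)$ the space of bounded linear operators from $X$ to $Y$ with the operator norm. A pair of Banach spaces $(X,Y)$ has the strong Bishop–Phelps–Bollobás property (sBPBp) if for every $\varepsilon>0$ and every $T\in\mathcal{L}(X,Y)$ with $\|T\|=1$ there exists $\eta=\eta(\varepsilon,T)>0$ such that whenever $x_0\in S_X$ satisfies $\|T(x_0)\|>1-\eta$, there exists $x_1\in S_X$ with $\|T(x_1)\|=1$ and $\|x_1-x_0\|<\varepsilon$. *)

From Stdlib Require Import Reals List.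
Open Scope R_scope.

(** Scalar field K = R or C (C modelled as R*R). *)
Inductive field_kind := RealF | ComplexF.

Definition scalar (k : field_kind) : Type :=
  match k with RealF => R | ComplexF => (R * R)%type end.

Definition s_zero (k : field_kind) : scalar k :=
  match k return scalar k with RealF => 0 | ComplexF => (0, 0) end.
Definition s_one (k : field_kind) : scalar k :=
  match k return scalar k with RealF => 1 | ComplexF => (1, 0) end.
Definition s_add (k : field_kind) : scalar k -> scalar k -> scalar k :=
  match k return scalar k -> scalar k -> scalar k with
  | RealF => Rplus
  | ComplexF => fun a b => (fst a + fst b, snd a + snd b)
  end.
Definition s_mul (k : field_kind) : scalar k -> scalar k -> scalar k :=
  match k return scalar k -> scalar k -> scalar k with
  | RealF => Rmult
  | ComplexF => fun a b =>
      (fst a * fst b - snd a * snd b, fst a * snd b + snd a * fst b)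
  end.
Definition s_abs (k : field_kind) : scalar k -> R :=
  match k return scalar k -> R with
  | RealF => Rabs
  | ComplexF => fun a => sqrt (fst a * fst a + snd a * snd a)
  end.

Record NormedSpace (k : field_kind) := {
  carrier :> Type;
  vzero : carrier;
  vadd : carrier -> carrier -> carrier;
  vopp : carrier -> carrier;
  vscal : scalar k -> carrier -> carrier;
  vnorm : carrier -> R;
  vadd_assoc : forall x y z, vadd x (vadd y z) = vadd (vadd x y) z;
  vadd_comm : forall x y, vadd x y = vadd y x;
  vadd_0 : forall x, vadd vzero x = x;
  vadd_opp : forall x, vadd x (vopp x) = vzero;
  vscal_1 : forall x, vscal (s_one k) x = x;
  vscal_assoc : forall a b x, vscal a (vscal b x) = vscal (s_mul k a b) x;
  vscal_distr_v : forall a x y, vscal a (vadd x y) = vadd (vscal a x) (vscal a y);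
  vscal_distr_s : forall a b x, vscal (s_add k a b) x = vadd (vscal a x) (vscal b x);
  vnorm_eq0 : forall x, vnorm x = 0 -> x = vzero;
  vnorm_scal : forall a x, vnorm (vscal a x) = s_abs k a * vnorm x;
  vnorm_triangle : forall x y, vnorm (vadd x y) <= vnorm x + vnorm y
}.

Arguments vzero {k} _.
Arguments vadd {k} {_} _ _.
Arguments vopp {k} {_} _.
Arguments vscal {k} {_} _ _.
Arguments vnorm {k} {_} _.

Definition vsub {k} {X : NormedSpace k} (x y : X) : X := vadd x (vopp y).

Definition Banach {k} (X : NormedSpace k) : Prop :=
  forall u : nat -> X,
    (forall eps, 0 < eps -> exists N, forall n m, (N <= n)%nat -> (N <= m)%nat ->
        vnorm (vsub (u n) (u m)) < eps) ->
    exists l : X, forall eps, 0 < eps -> exists N, forall n, (N <= n)%nat ->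
        vnorm (vsub (u n) l) < eps.

Definition uniformly_convex {k} (X : NormedSpace k) : Prop :=
  forall eps, 0 < eps -> exists delta, 0 < delta /\
    forall x y : X, vnorm x = 1 -> vnorm y = 1 -> eps <= vnorm (vsub x y) ->
      vnorm (vadd x y) / 2 <= 1 - delta.

Fixpoint lin_comb {k} {X : NormedSpace k} (cs : list (scalar k * X)) : X :=
  match cs with
  | nil => vzero X
  | (a, v) :: cs' => vadd (vscal a v) (lin_comb cs')
  end.

Definition finite_dim {k} (X : NormedSpace k) : Prop :=
  exists B : list X, forall y : X,
    exists cs : list (scalar k * X),
      (forall p, In p cs -> In (snd p) B) /\ y = lin_comb cs.

Definition is_linear {k} {X Y : NormedSpace k} (T : X -> Y) : Prop :=
  (forall x y, T (vadd x y) = vadd (T x) (T y)) /\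
  (forall a x, T (vscal a x) = vscal a (T x)).

Definition bounded_linear {k} {X Y : NormedSpace k} (T : X -> Y) : Prop :=
  is_linear T /\ exists C, forall x, vnorm (T x) <= C * vnorm x.

Definition op_norm_is {k} {X Y : NormedSpace k} (T : X -> Y) (r : R) : Prop :=
  is_lub (fun t => exists x : X, vnorm x <= 1 /\ t = vnorm (T x)) r.

Definition sBPBp {k} (X Y : NormedSpace k) : Prop :=
  forall eps, 0 < eps ->
  forall T : X -> Y, bounded_linear T -> op_norm_is T 1 ->
    exists eta, 0 < eta /\
      forall x0 : X, vnorm x0 = 1 -> 1 - eta < vnorm (T x0) ->
        exists x1 : X, vnorm x1 = 1 /\ vnorm (T x1) = 1 /\ vnorm (vsub x1 x0) < eps.

(* Suppose the property fails for some T and eps.  Then there are unit vectors x_n with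
   ||T x_n|| -> 1 that stay eps away from every norm-attaining unit vector.  Since Y is
   finite-dimensional, some subsequence of T x_n converges; then ||T (x_n + x_m)|| -> 2
   along it, so ||x_n + x_m|| -> 2 and uniform convexity makes the subsequence Cauchy.
   Its limit x is a unit vector with ||T x|| = 1, yet it is eps away from the x_n: a
   contradiction. *)

From Stdlib Require Import Reals Lra Lia Classical ClassicalEpsilon List.
Open Scope R_scope.

Definition s_neg (k : field_kind) : scalar k -> scalar k :=
  match k return scalar k -> scalar k with
  | RealF => Ropp
  | ComplexF => fun a => (- fst a, - snd a)
  end.

Definition s_ofR (k : field_kind) : R -> scalar k :=
  match k return R -> scalar k with
  | RealF => fun r => r
  | ComplexF => fun r => (r, 0)
  end.

Definition s_inv (k : field_kind) : scalar k -> scalar k :=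
  match k return scalar k -> scalar k with
  | RealF => Rinv
  | ComplexF => fun a => let r := fst a * fst a + snd a * snd a in
                (fst a / r, - snd a / r)
  end.

Lemma s_add_0 k : s_add k (s_zero k) (s_zero k) = s_zero k.
Proof. destruct k; simpl; f_equal; lra. Qed.

Lemma s_add_neg k a : s_add k a (s_neg k a) = s_zero k.
Proof. destruct k; simpl; [lra | destruct a; simpl; f_equal; lra]. Qed.

Lemma s_abs_0 k : s_abs k (s_zero k) = 0.
Proof.
  destruct k; simpl; [apply Rabs_R0|].
  replace (0 * 0 + 0 * 0) with 0 by lra. apply sqrt_0.
Qed.

Lemma s_abs_ge0 k a : 0 <= s_abs k a.
Proof. destruct k; simpl; [apply Rabs_pos | apply sqrt_pos]. Qed.

Lemma s_abs_neg1 k : s_abs k (s_neg k (s_one k)) = 1.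
Proof.
  destruct k; simpl.
  - rewrite Rabs_Ropp; apply Rabs_R1.
  - replace (- (1) * - (1) + - 0 * - 0) with (1 * 1) by lra. apply sqrt_square; lra.
Qed.

Lemma s_abs_two k : s_abs k (s_add k (s_one k) (s_one k)) = 2.
Proof.
  destruct k; simpl.
  - rewrite Rabs_right; lra.
  - replace ((1 + 1) * (1 + 1) + (0 + 0) * (0 + 0)) with (2 * 2) by ring.
    apply sqrt_square; lra.
Qed.

Lemma s_abs_ofR k r : s_abs k (s_ofR k r) = Rabs r.
Proof.
  destruct k; simpl; [reflexivity|].
  replace (r * r + 0 * 0) with (Rsqr r) by (unfold Rsqr; lra). apply sqrt_Rsqr_abs.
Qed.

Lemma s_inv_spec k a : a <> s_zero k ->
  s_mul k (s_inv k a) a = s_one k /\ s_abs k (s_inv k a) * s_abs k a = 1.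
Proof.
  destruct k; simpl; intro Ha.
  - split; [field; auto|]. rewrite <- Rabs_mult, Rinv_l; auto. apply Rabs_R1.
  - destruct a as [x y]; simpl in *.
    assert (Hr : 0 < x * x + y * y).
    { destruct (Req_dec x 0), (Req_dec y 0); subst; [exfalso; auto | nra | nra | nra]. }
    split; [f_equal; field; lra|].
    rewrite <- sqrt_mult by nra.
    replace ((x / (x * x + y * y) * (x / (x * x + y * y)) +
       - y / (x * x + y * y) * (- y / (x * x + y * y))) * (x * x + y * y)) with (1 * 1)
       by (field; lra).
    apply sqrt_square; lra.
Qed.

Lemma s_abs_fst (a : R * R) : Rabs (fst a) <= s_abs ComplexF a.
Proof.
  destruct a as [x y]; simpl. rewrite <- sqrt_Rsqr_abs. apply sqrt_le_1_alt. unfold Rsqr; nra.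
Qed.

Lemma s_abs_snd (a : R * R) : Rabs (snd a) <= s_abs ComplexF a.
Proof.
  destruct a as [x y]; simpl. rewrite <- sqrt_Rsqr_abs. apply sqrt_le_1_alt. unfold Rsqr; nra.
Qed.

Lemma s_abs_le_Rabs_sum x y : s_abs ComplexF (x, y) <= Rabs x + Rabs y.
Proof.
  simpl. pose proof (Rabs_pos x); pose proof (Rabs_pos y).
  rewrite <- (sqrt_square (Rabs x + Rabs y)) by lra.
  apply sqrt_le_1_alt.
  assert (x * x = Rabs x * Rabs x) by (rewrite <- Rabs_mult, Rabs_right; nra).
  assert (y * y = Rabs y * Rabs y) by (rewrite <- Rabs_mult, Rabs_right; nra).
  nra.
Qed.

Section VectorAlgebra.
Context {k : field_kind} {X : NormedSpace k}.
Implicit Types x y z : X.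

Lemma vadd_0r x : vadd x (vzero X) = x.
Proof. rewrite vadd_comm; apply vadd_0. Qed.

Lemma vadd_cancel x y z : vadd x y = vadd x z -> y = z.
Proof.
  intro H. rewrite <- (vadd_0 _ X y), <- (vadd_0 _ X z), <- (vadd_opp _ X x),
    (vadd_comm _ X x), <- !vadd_assoc, H. reflexivity.
Qed.

Lemma vscal_0 x : vscal (s_zero k) x = vzero X.
Proof.
  apply (vadd_cancel (vscal (s_zero k) x)).
  rewrite <- vscal_distr_s, s_add_0, vadd_0r. reflexivity.
Qed.

Lemma vscal_vzero a : vscal a (vzero X) = vzero X.
Proof.
  apply (vadd_cancel (vscal a (vzero X))). rewrite <- vscal_distr_v, !vadd_0r. reflexivity.
Qed.

Lemma vopp_unique x y : vadd x y = vzero X -> y = vopp x.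
Proof. intro H. apply (vadd_cancel x). rewrite H, vadd_opp. reflexivity. Qed.

Lemma vopp_opp x : vopp (vopp x) = x.
Proof. symmetry; apply vopp_unique. rewrite vadd_comm; apply vadd_opp. Qed.

Lemma vscal_neg a x : vscal (s_neg k a) x = vopp (vscal a x).
Proof. apply vopp_unique. rewrite <- vscal_distr_s, s_add_neg. apply vscal_0. Qed.

Lemma vopp_add x y : vopp (vadd x y) = vadd (vopp x) (vopp y).
Proof.
  symmetry; apply vopp_unique.
  rewrite <- vadd_assoc, (vadd_assoc _ X y), (vadd_comm _ X y (vopp x)), <- vadd_assoc,
    vadd_opp, vadd_0r.
  apply vadd_opp.
Qed.

Lemma vnorm_0 : vnorm (vzero X) = 0.
Proof. rewrite <- (vscal_0 (vzero X)), vnorm_scal, s_abs_0. ring. Qed.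

Lemma vnorm_opp x : vnorm (vopp x) = vnorm x.
Proof.
  replace (vopp x) with (vscal (s_neg k (s_one k)) x) by (rewrite vscal_neg, vscal_1; auto).
  rewrite vnorm_scal, s_abs_neg1. ring.
Qed.

Lemma vnorm_ge0 x : 0 <= vnorm x.
Proof.
  pose proof (vnorm_triangle _ X x (vopp x)) as H.
  rewrite vadd_opp, vnorm_0, vnorm_opp in H. lra.
Qed.

Lemma vnorm_sub_sym x y : vnorm (vsub x y) = vnorm (vsub y x).
Proof.
  replace (vsub y x) with (vopp (vsub x y)); [apply eq_sym, vnorm_opp|].
  unfold vsub. rewrite vopp_add, vopp_opp, vadd_comm. reflexivity.
Qed.

Lemma vnorm_sub_triangle x y z : vnorm (vsub x z) <= vnorm (vsub x y) + vnorm (vsub y z).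
Proof.
  replace (vsub x z) with (vadd (vsub x y) (vsub y z)); [apply vnorm_triangle|].
  unfold vsub. rewrite <- vadd_assoc, (vadd_assoc _ X (vopp y)), (vadd_comm _ X (vopp y) y),
    vadd_opp, vadd_0. reflexivity.
Qed.

Lemma vnorm_le_sub x y : vnorm x <= vnorm (vsub x y) + vnorm y.
Proof.
  replace x with (vadd (vsub x y) y) at 1; [apply vnorm_triangle|].
  unfold vsub. rewrite <- vadd_assoc, (vadd_comm _ X (vopp y)), vadd_opp, vadd_0r.
  reflexivity.
Qed.

Lemma vsub_eq0 x y : vsub x y = vzero X -> x = y.
Proof.
  intro H. rewrite <- (vadd_0r x), <- (vadd_opp _ X y), (vadd_comm _ X y), vadd_assoc.
  fold (vsub x y). rewrite H, vadd_0. reflexivity.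
Qed.

Lemma vnorm_add_ge x y : vnorm y <= vnorm (vadd x y) + vnorm x.
Proof.
  replace y with (vadd (vopp x) (vadd x y)) at 1
    by (rewrite vadd_assoc, (vadd_comm _ X (vopp x)), vadd_opp, vadd_0; auto).
  rewrite Rplus_comm, <- (vnorm_opp x). apply vnorm_triangle.
Qed.

Lemma vnorm_double_le x y : 2 * vnorm x <= vnorm (vadd x y) + vnorm (vsub x y).
Proof.
  assert (E : vscal (s_add k (s_one k) (s_one k)) x = vadd (vadd x y) (vsub x y)).
  { rewrite vscal_distr_s, vscal_1. unfold vsub.
    rewrite <- vadd_assoc, (vadd_assoc _ X y), (vadd_comm _ X y x), <- vadd_assoc,
      vadd_opp, vadd_0r. reflexivity. }
  pose proof (vnorm_triangle _ X (vadd x y) (vsub x y)) as H.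
  rewrite <- E, vnorm_scal, s_abs_two in H. exact H.
Qed.

Lemma vsub_add_add x y x' y' : vsub (vadd x y) (vadd x' y') = vadd (vsub x x') (vsub y y').
Proof.
  unfold vsub. rewrite vopp_add, <- !vadd_assoc. f_equal.
  rewrite !vadd_assoc. f_equal. apply vadd_comm.
Qed.

Lemma vsub_scal a c x : vsub (vscal a x) (vscal c x) = vscal (s_add k a (s_neg k c)) x.
Proof. unfold vsub. rewrite vscal_distr_s, vscal_neg. reflexivity. Qed.

End VectorAlgebra.

Definition increasing (phi : nat -> nat) := forall n, (phi n < phi (S n))%nat.

Lemma increasing_lt phi : increasing phi -> forall m n, (m < n)%nat -> (phi m < phi n)%nat.
Proof. intros Hphi m n Hmn. induction Hmn; [apply Hphi | specialize (Hphi m0); lia]. Qed.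

Lemma increasing_ge_id phi : increasing phi -> forall n, (n <= phi n)%nat.
Proof. intros Hphi n; induction n; [lia | specialize (Hphi n); lia]. Qed.

Lemma increasing_comp phi psi :
  increasing phi -> increasing psi -> increasing (fun n => phi (psi n)).
Proof. intros Hphi Hpsi n. apply increasing_lt, Hpsi; exact Hphi. Qed.

Lemma eventually_subseq (P : nat -> Prop) phi : increasing phi ->
  (exists N, forall n, (N <= n)%nat -> P n) -> exists N, forall n, (N <= n)%nat -> P (phi n).
Proof.
  intros Hphi [N HN]. exists N. intros n Hn.
  apply HN. pose proof (increasing_ge_id phi Hphi n). lia.
Qed.

Lemma increasing_choice (P : nat -> nat -> Prop) :
  (forall j N, exists p, (N <= p)%nat /\ P j p) -> exists phi, increasing phi /\ forall j, P j (phi j).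
Proof.
  intro H. destruct (choice (fun (jN : nat * nat) p => (snd jN <= p)%nat /\ P (fst jN) p)) as [g Hg].
  { intros [j N]. apply H. }
  exists (fix phi n := match n with O => g (O, O) | S m => g (S m, S (phi m)) end).
  split.
  - intro n. apply (Hg (S n, _)).
  - intros [|j]; [apply (Hg (O, O)) | apply (Hg (S j, _))].
Qed.

Lemma eventually_inv_lt eps : 0 < eps ->
  exists N, forall n, (N <= n)%nat -> / (INR n + 1) < eps.
Proof.
  intro He. destruct (archimed_cor1 eps He) as [N [H1 H2]]. exists N. intros n Hn.
  apply le_INR in Hn. assert (0 < INR N) by (apply lt_0_INR; lia).
  eapply Rle_lt_trans; [|exact H1]. apply Rinv_le_contravar; lra.
Qed.

Lemma R_bounded_cvg_subseq (u : nat -> R) : (exists M, forall n, Rabs (u n) <= M) ->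
  exists phi, increasing phi /\ exists l, forall eps, 0 < eps ->
    exists N, forall n, (N <= n)%nat -> Rabs (u (phi n) - l) < eps.
Proof.
  intros [M HM].
  destruct (Bolzano_Weierstrass u (fun c => -M <= c <= M) (compact_P3 _ _)) as [l Hl].
  { intro n. specialize (HM n). unfold Rabs in HM. destruct (Rcase_abs (u n)); lra. }
  destruct (increasing_choice (fun j p => Rabs (u p - l) < / (INR j + 1))) as [phi [Hphi Hp]].
  { intros j N.
    assert (Hpos : 0 < / (INR j + 1)) by (apply Rinv_0_lt_compat; pose proof (pos_INR j); lra).
    destruct (Hl (fun y => Rabs (y - l) < / (INR j + 1)) N) as [p Hp]; [|exists p; auto].
    exists (mkposreal _ Hpos). intros y Hy. exact Hy. }
  exists phi; split; auto. exists l. intros eps He.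
  destruct (eventually_inv_lt eps He) as [N HN].
  exists N; intros n Hn. eapply Rlt_trans; [apply Hp | auto].
Qed.

Definition scvg k (a : nat -> scalar k) (l : scalar k) :=
  forall eps, 0 < eps -> exists N, forall n, (N <= n)%nat ->
    s_abs k (s_add k (a n) (s_neg k l)) < eps.

Lemma scvg_subseq k a l phi : scvg k a l -> increasing phi -> scvg k (fun n => a (phi n)) l.
Proof.
  intros H Hphi eps He.
  apply (eventually_subseq (fun n => s_abs k (s_add k (a n) (s_neg k l)) < eps)); auto.
Qed.

Lemma scalar_bounded_cvg_subseq k (a : nat -> scalar k) :
  (exists M, forall n, s_abs k (a n) <= M) ->
  exists phi, increasing phi /\ exists l, scvg k (fun n => a (phi n)) l.
Proof.
  intros [M HM]. destruct k; [apply R_bounded_cvg_subseq; exists M; auto|].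
  destruct (R_bounded_cvg_subseq (fun n => fst (a n))) as [p [Hp [l1 H1]]].
  { exists M; intro n; eapply Rle_trans; [apply s_abs_fst | apply HM]. }
  destruct (R_bounded_cvg_subseq (fun n => snd (a (p n)))) as [q [Hq [l2 H2]]].
  { exists M; intro n; eapply Rle_trans; [apply s_abs_snd | apply HM]. }
  exists (fun n => p (q n)); split; [apply increasing_comp; auto|].
  exists (l1, l2). intros eps He.
  destruct (eventually_subseq _ q Hq (H1 (eps / 2) ltac:(lra))) as [N1 HN1].
  destruct (H2 (eps / 2) ltac:(lra)) as [N2 HN2].
  exists (max N1 N2). intros n Hn.
  eapply Rle_lt_trans; [apply s_abs_le_Rabs_sum|].
  specialize (HN1 n ltac:(lia)). specialize (HN2 n ltac:(lia)).
  simpl in *. unfold Rminus in *. lra.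
Qed.

Section Sequences.
Context {k : field_kind} {X : NormedSpace k}.

Definition conv (u : nat -> X) (l : X) :=
  forall eps, 0 < eps -> exists N, forall n, (N <= n)%nat -> vnorm (vsub (u n) l) < eps.

Definition cauchy (u : nat -> X) :=
  forall eps, 0 < eps -> exists N, forall n m, (N <= n)%nat -> (N <= m)%nat ->
    vnorm (vsub (u n) (u m)) < eps.

Definition bounded (u : nat -> X) := exists M, forall n, vnorm (u n) <= M.

Lemma conv_subseq u l phi : conv u l -> increasing phi -> conv (fun n => u (phi n)) l.
Proof.
  intros H Hphi eps He. apply (eventually_subseq (fun n => vnorm (vsub (u n) l) < eps)); auto.
Qed.

Lemma conv_unique u l l' : conv u l -> conv u l' -> l = l'.
Proof.
  intros H H'. apply vsub_eq0, vnorm_eq0.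
  apply Rle_antisym; [|apply vnorm_ge0]. apply Rnot_lt_le; intro Hlt.
  set (e := vnorm (vsub l l')) in *.
  destruct (H (e / 2) ltac:(lra)) as [N1 H1]. destruct (H' (e / 2) ltac:(lra)) as [N2 H2].
  specialize (H1 (max N1 N2) ltac:(lia)). specialize (H2 (max N1 N2) ltac:(lia)).
  pose proof (vnorm_sub_triangle l (u (max N1 N2)) l').
  rewrite (vnorm_sub_sym l (u _)) in H0. fold e in H0. lra.
Qed.

Lemma conv_scal_add y a alpha (b : X) z zeta :
  (forall n, y n = vadd (vscal (a n) b) (z n)) -> scvg k a alpha -> conv z zeta ->
  conv y (vadd (vscal alpha b) zeta).
Proof.
  intros Hy Ha Hz eps He. pose proof (vnorm_ge0 b).
  destruct (Ha (eps / 2 / (vnorm b + 1))) as [N1 HN1]; [apply Rdiv_lt_0_compat; lra|].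
  destruct (Hz (eps / 2) ltac:(lra)) as [N2 HN2].
  exists (max N1 N2). intros n Hn. specialize (HN1 n ltac:(lia)). specialize (HN2 n ltac:(lia)).
  rewrite Hy, vsub_add_add.
  eapply Rle_lt_trans; [apply vnorm_triangle|]. rewrite vsub_scal, vnorm_scal.
  set (s := s_abs k (s_add k (a n) (s_neg k alpha))) in *.
  assert (s * vnorm b <= s * (vnorm b + 1)) by (apply Rmult_le_compat_l; [apply s_abs_ge0 | lra]).
  assert (s * (vnorm b + 1) < eps / 2).
  { apply Rmult_lt_reg_r with (/ (vnorm b + 1)); [apply Rinv_0_lt_compat; lra|].
    rewrite Rmult_assoc, Rinv_r; lra. }
  lra.
Qed.

End Sequences.

Section Span.
Context {k : field_kind} {X : NormedSpace k}.
Implicit Types (L : list X) (x y z b : X).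

Definition inspan L y :=
  exists cs : list (scalar k * X), (forall p, In p cs -> In (snd p) L) /\ y = lin_comb cs.

Lemma inspan_nil y : inspan nil y -> y = vzero X.
Proof. intros [[|p cs] [H1 H2]]; [auto | exfalso; apply (H1 p); simpl; auto]. Qed.

Lemma inspan_0 L : inspan L (vzero X).
Proof. exists nil; split; simpl; tauto. Qed.

Lemma inspan_add L x y : inspan L x -> inspan L y -> inspan L (vadd x y).
Proof.
  intros [c1 [H1 ->]] [c2 [H2 ->]]. exists (c1 ++ c2). split.
  - intros p Hp. apply in_app_or in Hp. destruct Hp; auto.
  - clear H1. induction c1 as [|[a v] c1 IH]; simpl; [rewrite vadd_0; auto|].
    rewrite <- IH. symmetry; apply vadd_assoc.
Qed.

Lemma inspan_scal L a x : inspan L x -> inspan L (vscal a x).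
Proof.
  intros [c [H ->]]. exists (map (fun p => (s_mul k a (fst p), snd p)) c). split.
  - intros p Hp. apply in_map_iff in Hp. destruct Hp as [q [<- Hq]]. simpl; auto.
  - clear H. induction c as [|[b v] c IH]; simpl; [apply vscal_vzero|].
    rewrite vscal_distr_v, vscal_assoc, IH. reflexivity.
Qed.

Lemma inspan_in L b : In b L -> inspan L b.
Proof.
  intro H. exists ((s_one k, b) :: nil). split.
  - intros p [<-|[]]. simpl; auto.
  - simpl. rewrite vscal_1, vadd_0r. reflexivity.
Qed.

Lemma inspan_cons L b a z : inspan L z -> inspan (b :: L) (vadd (vscal a b) z).
Proof.
  intros [c [H ->]]. exists ((a, b) :: c). split; [|reflexivity].
  intros p [<-|Hp]; simpl; auto.
Qed.

Lemma inspan_weaken L b y : inspan L y -> inspan (b :: L) y.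
Proof. intros [c [H ->]]. exists c; split; [intros p Hp; simpl; auto | reflexivity]. Qed.

Lemma inspan_consP L b y :
  inspan (b :: L) y -> exists a z, inspan L z /\ y = vadd (vscal a b) z.
Proof.
  intros [c [H ->]]. induction c as [|[a v] c IH]; simpl.
  - exists (s_zero k), (vzero X). split; [apply inspan_0 | rewrite vscal_0, vadd_0; auto].
  - destruct IH as [a' [z [Hz ->]]]; [intros p Hp; apply H; simpl; auto|].
    destruct (H (a, v) (or_introl eq_refl)) as [Hv|Hv]; simpl in Hv; [subst v|].
    + exists (s_add k a a'), z. split; auto. rewrite vadd_assoc, vscal_distr_s. reflexivity.
    + exists a', (vadd (vscal a v) z). split.
      * apply inspan_add; auto. apply inspan_scal, inspan_in; auto.
      * rewrite !vadd_assoc, (vadd_comm _ X (vscal a v)). reflexivity.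
Qed.

Lemma inspan_cons_absorb L b y : inspan L b -> inspan (b :: L) y -> inspan L y.
Proof.
  intros Hb Hy. destruct (inspan_consP L b y Hy) as [a [z [Hz ->]]].
  apply inspan_add; [apply inspan_scal|]; auto.
Qed.

Lemma vnorm_scal_add_ge L b d a z :
  (forall w, inspan L w -> d <= vnorm (vsub b w)) -> inspan L z ->
  s_abs k a * d <= vnorm (vadd (vscal a b) z).
Proof.
  intros Hsep Hz. destruct (classic (a = s_zero k)) as [->|Ha].
  - rewrite s_abs_0, Rmult_0_l. apply vnorm_ge0.
  - destruct (s_inv_spec k a Ha) as [Hm Hc]. set (c := s_inv k a) in *.
    assert (E : vscal c (vadd (vscal a b) z) = vsub b (vscal (s_neg k c) z)).
    { unfold vsub. rewrite vscal_neg, vopp_opp, vscal_distr_v, vscal_assoc, Hm, vscal_1.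
      reflexivity. }
    pose proof (Hsep _ (inspan_scal L (s_neg k c) z Hz)) as H.
    rewrite <- E, vnorm_scal in H.
    apply Rmult_le_compat_l with (r := s_abs k a) in H; [|apply s_abs_ge0].
    rewrite <- Rmult_assoc, (Rmult_comm (s_abs k a) (s_abs k c)), Hc, Rmult_1_l in H.
    exact H.
Qed.

Definition span_BW L := forall y : nat -> X, (forall n, inspan L (y n)) -> bounded y ->
  exists phi, increasing phi /\ exists l, inspan L l /\ conv (fun n => y (phi n)) l.

Lemma span_BW_nil : span_BW nil.
Proof.
  intros y Hy _. exists (fun n => n). split; [intro n; lia|].
  exists (vzero X). split; [apply inspan_0|].
  intros eps He. exists O. intros n _. rewrite (inspan_nil _ (Hy n)). unfold vsub.
  rewrite vadd_opp, vnorm_0; auto.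
Qed.

Lemma span_BW_closed L (w : nat -> X) b : span_BW L ->
  (forall n, inspan L (w n)) -> bounded w -> conv w b -> inspan L b.
Proof.
  intros HBW Hw Hbd Hconv. destruct (HBW w Hw Hbd) as [phi [Hphi [l [Hl Hl']]]].
  rewrite (conv_unique _ _ _ (conv_subseq w b phi Hconv Hphi) Hl'). exact Hl.
Qed.

Lemma span_BW_cons_adherent L b : span_BW L ->
  (forall d, 0 < d -> exists z, inspan L z /\ vnorm (vsub b z) < d) -> span_BW (b :: L).
Proof.
  intros HBW Had.
  assert (Hb : inspan L b).
  { destruct (choice (fun n z => inspan L z /\ vnorm (vsub b z) < / (INR n + 1))) as [w Hw].
    { intro n. apply Had. apply Rinv_0_lt_compat. pose proof (pos_INR n). lra. }
    apply (span_BW_closed L w b HBW); [apply Hw| |].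
    - exists (vnorm b + 1). intro n. destruct (Hw n) as [_ Hwn].
      pose proof (vnorm_le_sub (w n) b). rewrite vnorm_sub_sym in H.
      assert (/ (INR n + 1) <= 1).
      { rewrite <- Rinv_1. apply Rinv_le_contravar; [lra|]. pose proof (pos_INR n); lra. }
      lra.
    - intros eps He. destruct (eventually_inv_lt eps He) as [N HN]. exists N. intros n Hn.
      rewrite vnorm_sub_sym. eapply Rlt_trans; [apply Hw | apply HN; exact Hn]. }
  intros y Hy Hbd. destruct (HBW y) as [phi [Hphi [l [Hl Hconv]]]]; auto.
  - intro n. apply (inspan_cons_absorb L b); auto.
  - exists phi; split; auto. exists l; split; auto. apply inspan_weaken; auto.
Qed.

Lemma span_BW_cons_separated L b d : span_BW L -> 0 < d ->
  (forall z, inspan L z -> d <= vnorm (vsub b z)) -> span_BW (b :: L).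
Proof.
  intros HBW Hd Hsep y Hy [M HM].
  destruct (choice (fun n (p : scalar k * X) =>
      inspan L (snd p) /\ y n = vadd (vscal (fst p) b) (snd p))) as [p Hp].
  { intro n. destruct (inspan_consP _ _ _ (Hy n)) as [a [z H]]. exists (a, z); exact H. }
  set (a := fun n => fst (p n)). set (z := fun n => snd (p n)).
  assert (Hdec : forall n, inspan L (z n) /\ y n = vadd (vscal (a n) b) (z n)) by apply Hp.
  clear Hp.
  assert (Ha : forall n, s_abs k (a n) <= M / d).
  { intro n. pose proof (vnorm_scal_add_ge L b d (a n) (z n) Hsep (proj1 (Hdec n))) as H.
    rewrite <- (proj2 (Hdec n)) in H. specialize (HM n).
    apply Rmult_le_reg_r with d; auto. unfold Rdiv. rewrite Rmult_assoc, Rinv_l; lra. }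
  destruct (scalar_bounded_cvg_subseq k a (ex_intro _ _ Ha)) as [psi [Hpsi [alpha Halpha]]].
  destruct (HBW (fun n => z (psi n))) as [chi [Hchi [zeta [Hzeta Hconv]]]].
  { intro n; apply Hdec. }
  { exists (M + M / d * vnorm b). intro n.
    pose proof (vnorm_add_ge (vscal (a (psi n)) b) (z (psi n))) as H.
    rewrite <- (proj2 (Hdec (psi n))), vnorm_scal in H.
    pose proof (HM (psi n)). pose proof (vnorm_ge0 b).
    pose proof (Rmult_le_compat_r _ _ _ H1 (Ha (psi n))). lra. }
  exists (fun n => psi (chi n)). split; [apply increasing_comp; auto|].
  exists (vadd (vscal alpha b) zeta). split; [apply inspan_cons; auto|].
  apply (conv_scal_add _ (fun n => a (psi (chi n))) _ _ (fun n => z (psi (chi n)))); auto.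
  - intro n. apply Hdec.
  - apply (scvg_subseq k _ _ chi Halpha Hchi).
Qed.

Lemma span_BW_all L : span_BW L.
Proof.
  induction L as [|b L IH]; [apply span_BW_nil|].
  destruct (classic (exists d, 0 < d /\ forall z, inspan L z -> d <= vnorm (vsub b z)))
    as [[d [Hd Hsep]] | Hnsep].
  - apply (span_BW_cons_separated L b d); auto.
  - apply span_BW_cons_adherent; auto. intros d Hd. apply NNPP; intro Hn. apply Hnsep.
    exists d; split; auto. intros z Hz. apply Rnot_lt_le. intro Hlt. apply Hn. exists z; auto.
Qed.

End Span.

Section Operator.
Context {k : field_kind} {X Y : NormedSpace k} (T : X -> Y).
Hypothesis T_linear : is_linear T.

Lemma linear_0 : T (vzero X) = vzero Y.
Proof.
  apply (vadd_cancel (T (vzero X))). rewrite <- (proj1 T_linear), vadd_0, vadd_0r.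
  reflexivity.
Qed.

Lemma linear_sub x y : T (vsub x y) = vsub (T x) (T y).
Proof.
  unfold vsub. rewrite (proj1 T_linear). f_equal. apply vopp_unique.
  rewrite <- (proj1 T_linear), vadd_opp. apply linear_0.
Qed.

Lemma op_norm_1_le : op_norm_is T 1 -> forall x, vnorm (T x) <= vnorm x.
Proof.
  intros Hop x. destruct (Req_dec (vnorm x) 0) as [H0|H0].
  - apply vnorm_eq0 in H0. subst. rewrite linear_0, !vnorm_0. lra.
  - pose proof (vnorm_ge0 x). assert (Hx : 0 < vnorm x) by lra.
    set (c := s_ofR k (/ vnorm x)).
    assert (Hc : s_abs k c = / vnorm x).
    { unfold c. rewrite s_abs_ofR. apply Rabs_right. left; apply Rinv_0_lt_compat; auto. }
    assert (H1 : vnorm (T (vscal c x)) <= 1).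
    { apply (proj1 Hop). exists (vscal c x). split; auto.
      rewrite vnorm_scal, Hc, Rinv_l; lra. }
    rewrite (proj2 T_linear), vnorm_scal, Hc in H1.
    apply Rmult_le_compat_l with (r := vnorm x) in H1; [|lra].
    rewrite <- Rmult_assoc, Rinv_r in H1; lra.
Qed.

Hypothesis T_le : forall x, vnorm (T x) <= vnorm x.

Variable w : nat -> X.
Hypothesis w_unit : forall n, vnorm (w n) = 1.
Hypothesis Tw_norming :
  forall d, 0 < d -> exists N, forall n, (N <= n)%nat -> 1 - d < vnorm (T (w n)).

(* If T w_n and T w_m are close to the same l, then ||w_n + w_m|| >= ||T (w_n + w_m)|| is
   close to 2, which uniform convexity only allows when w_n and w_m are close. *)
Lemma norming_cauchy l : uniformly_convex X -> conv (fun n => T (w n)) l -> cauchy w.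
Proof.
  intros HUC Hl d Hd. destruct (HUC d Hd) as [d' [Hd' HU]].
  destruct (Tw_norming (d' / 4) ltac:(lra)) as [N1 HN1].
  destruct (Hl (d' / 4) ltac:(lra)) as [N2 HN2].
  exists (max N1 N2). intros n m Hn Hm. apply Rnot_le_lt. intro Hge.
  pose proof (HU (w n) (w m) (w_unit n) (w_unit m) Hge).
  pose proof (T_le (vadd (w n) (w m))) as Hsum. rewrite (proj1 T_linear) in Hsum.
  pose proof (vnorm_double_le (T (w n)) (T (w m))).
  pose proof (vnorm_sub_triangle (T (w n)) l (T (w m))) as Htri.
  rewrite (vnorm_sub_sym l (T (w m))) in Htri.
  pose proof (HN1 n ltac:(lia)). pose proof (HN2 n ltac:(lia)). pose proof (HN2 m ltac:(lia)).
  simpl in *. lra.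
Qed.

Lemma norming_limit_attains x : conv w x -> vnorm x = 1 /\ vnorm (T x) = 1.
Proof.
  intro Hx.
  assert (Hx1 : vnorm x = 1).
  { apply Rle_antisym; apply le_epsilon; intros e He; destruct (Hx e He) as [N HN];
      specialize (HN N (le_n N)); pose proof (vnorm_le_sub (w N) x);
      pose proof (vnorm_le_sub x (w N)); rewrite vnorm_sub_sym in H0;
      rewrite w_unit in *; lra. }
  split; auto. apply Rle_antisym; [rewrite <- Hx1; apply T_le|].
  apply le_epsilon; intros e He.
  destruct (Hx (e / 2) ltac:(lra)) as [N1 HN1].
  destruct (Tw_norming (e / 2) ltac:(lra)) as [N2 HN2].
  set (n := max N1 N2). specialize (HN1 n ltac:(lia)). specialize (HN2 n ltac:(lia)).
  pose proof (vnorm_le_sub (T (w n)) (T x)). rewrite <- linear_sub in H.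
  pose proof (T_le (vsub (w n) x)). lra.
Qed.

End Operator.

Lemma not_sBPB_sequence {k} {X Y : NormedSpace k} (T : X -> Y) eps :
  ~ (exists eta, 0 < eta /\ forall x0 : X, vnorm x0 = 1 -> 1 - eta < vnorm (T x0) ->
       exists x1 : X, vnorm x1 = 1 /\ vnorm (T x1) = 1 /\ vnorm (vsub x1 x0) < eps) ->
  exists x : nat -> X, (forall n, vnorm (x n) = 1) /\
    (forall n, 1 - / (INR n + 1) < vnorm (T (x n))) /\
    (forall n x1, vnorm x1 = 1 -> vnorm (T x1) = 1 -> eps <= vnorm (vsub x1 (x n))).
Proof.
  intro Hfail.
  destruct (choice (fun n x0 => vnorm x0 = 1 /\ 1 - / (INR n + 1) < vnorm (T x0) /\
      forall x1, vnorm x1 = 1 -> vnorm (T x1) = 1 -> eps <= vnorm (vsub x1 x0))) as [x Hx].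
  - intro n. apply NNPP; intro Hn. apply Hfail. exists (/ (INR n + 1)). split.
    { apply Rinv_0_lt_compat; pose proof (pos_INR n); lra. }
    intros x0 H1 H2. apply NNPP; intro Hx1. apply Hn. exists x0. repeat split; auto.
    intros x1 Ha Hb. apply Rnot_lt_le. intro. apply Hx1. exists x1; auto.
  - exists x. repeat split; intros; apply Hx; auto.
Qed.

Theorem mainTheorem4 (k : field_kind) (X Y : NormedSpace k) :
  Banach X -> Banach Y -> uniformly_convex X -> finite_dim Y -> sBPBp X Y.
Proof.
  intros HBX _ HUC [B HB] eps Heps T [HT _] Hop.
  pose proof (op_norm_1_le T HT Hop) as T_le.
  apply NNPP; intro Hfail.
  destruct (not_sBPB_sequence T eps Hfail) as [x [Hx1 [Hxn Hfar]]].
  destruct (span_BW_all B (fun n => T (x n))) as [phi [Hphi [l [_ Hl]]]].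
  { intro n. apply HB. }
  { exists 1. intro n. rewrite <- (Hx1 n). apply T_le. }
  set (w := fun n => x (phi n)).
  assert (Hw : forall d, 0 < d -> exists N, forall n, (N <= n)%nat -> 1 - d < vnorm (T (w n))).
  { intros d Hd. apply (eventually_subseq (fun n => 1 - d < vnorm (T (x n)))); auto.
    destruct (eventually_inv_lt d Hd) as [N HN]. exists N. intros n Hn.
    specialize (Hxn n). specialize (HN n Hn). lra. }
  destruct (HBX w (norming_cauchy T HT T_le w (fun n => Hx1 (phi n)) Hw l HUC Hl)) as [xl Hxl].
  destruct (norming_limit_attains T HT T_le w (fun n => Hx1 (phi n)) Hw xl Hxl) as [H1 HT1].
  destruct (Hxl eps Heps) as [N HN]. specialize (HN N (le_n N)).
  specialize (Hfar (phi N) xl H1 HT1). rewrite vnorm_sub_sym in Hfar. unfold w in HN. lra.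
Qed.
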